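(* Let $S$ be a MANS-semigroup with $\mathrm{msg}(S)=\{n_1<n_2<\cdots<n_e<n_{e+1}\}$, where $e\geq 2$. Then $S'=\langle n_1,n_2,\ldots,n_e\rangle$ is a MANS-semigroup with $\mathrm{e}(S')=\mathrm{e}(S)-1$.
   Context: $\mathbb{N}=\{0,1,2,\ldots\}$. A numerical semigroup is a subset $S\subseteq\mathbb{N}$ closed under addition, containing $0$, with $\mathbb{N}\setminus S$ finite; $\langle A\rangle$ is the submonoid generated by $A$; $\mathrm{msg}(S)$ is the unique finite minimal system of generators and $\mathrm{e}(S)=|\mathrm{msg}(S)|$. $S$ is a MANS-semigroup if $w(1)<\cdots<w(\mathrm{m}(S)-1)$, where $\mathrm{m}(S)$ is the least element of $S\setminus\{0\}$ and $w(i)$ the least element of $S$ congruent to $i$ modulo $\mathrm{m}(S)$. *)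

From mathcomp Require Import all_boot.
Set Implicit Arguments. Unset Strict Implicit. Unset Printing Implicit Defensive.

Definition numerical_semigroup (S : nat -> Prop) : Prop :=
  [/\ S 0,
      (forall x y, S x -> S y -> S (x + y))
    & exists N, forall n, N <= n -> S n].

Definition gen (A : seq nat) (x : nat) : Prop :=
  exists c : nat -> nat, x = \sum_(i < size A) c i * nth 0 A i.

(* A (duplicate-free) is a minimal system of generators of S:
   it generates S and no sublist (subset) of it generates S unless it
   contains all of A. msg(S) is the unique such system. *)
Definition is_msg (S : nat -> Prop) (A : seq nat) : Prop :=
  [/\ uniq A,
      (forall x, gen A x <-> S x)
    & forall B : seq nat, {subset B <= A} ->
        (forall x, gen B x <-> S x) -> {subset A <= B}].

Definition is_multiplicity (S : nat -> Prop) (m : nat) : Prop :=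
  [/\ 0 < m, S m & forall x, S x -> 0 < x -> m <= x].

Definition is_apery_elt (S : nat -> Prop) (m i w : nat) : Prop :=
  [/\ S w, w = i %[mod m] & forall x, S x -> x = i %[mod m] -> w <= x].

Definition MANS (S : nat -> Prop) : Prop :=
  numerical_semigroup S /\
  exists m, is_multiplicity S m /\
    forall i j wi wj, 1 <= i -> i < j -> j <= m - 1 ->
      is_apery_elt S m i wi -> is_apery_elt S m j wj -> wi < wj.

From mathcomp Require Import all_boot zify.
From Stdlib Require Import Classical FunctionalExtensionality PropExtensionality.
Set Implicit Arguments. Unset Strict Implicit. Unset Printing Implicit Defensive.

(* Let m = n_1, the multiplicity of S.  By the MANS condition w(1) is the least
   element of S outside mN; as n_2 is not a multiple of m, w(1) <= n_2 < n_(e+1).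
   Every element of S below n_(e+1) is a sum of n_1, ..., n_e, so S' contains m
   and w(1): it is a numerical semigroup of multiplicity m.  For the MANS property
   of S' it suffices to show w'(j) < w'(j+1).  Write w'(j+1) = g + r with g a
   generator not divisible by m, and trade g for some v in S' with v < g and
   v + 1 = g (mod m); then v + r lies in S', has residue j and is below w'(j+1).
   Finally, any subset of a minimal system of generators is the minimal system of
   generators of the monoid it spans. *)

Inductive ngen (A : seq nat) : nat -> Prop :=
| ngen0 : ngen A 0
| ngenD a x : a \in A -> ngen A x -> ngen A (a + x).

Lemma ngen_add A x y : ngen A x -> ngen A y -> ngen A (x + y).
Proof.
move=> Ax Ay; elim: Ax => [|a z aA _ IH]; first by rewrite add0n.
by rewrite -addnA; apply: ngenD.
Qed.

Lemma ngen_mem A a : a \in A -> ngen A a.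
Proof. by move=> aA; rewrite -[a]addn0; apply: ngenD aA (ngen0 _). Qed.

Lemma ngen_mull A k x : ngen A x -> ngen A (k * x).
Proof.
move=> Ax; elim: k => [|k IH]; first by rewrite mul0n; apply: ngen0.
by rewrite mulSn; apply: ngen_add.
Qed.

Lemma sub_ngen A B x : {subset A <= B} -> ngen A x -> ngen B x.
Proof. by move=> sAB; elim=> [|a y aA _ IH]; [apply: ngen0 | apply: ngenD (sAB _ aA) IH]. Qed.

Lemma genP A x : gen A x <-> ngen A x.
Proof.
split.
  case=> c ->; elim: A c => [|a A IH] c; first by rewrite big_ord0; apply: ngen0.
  rewrite big_ord_recl /=; apply: ngen_add.
    by apply/ngen_mull/ngen_mem; rewrite mem_head.
  by apply: (sub_ngen (A := A)) (IH (c \o S)) => z zA; rewrite inE zA orbT.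
elim=> [|a y aA _ [c Hc]]; first by exists (fun=> 0); rewrite big1.
have ia : index a A < size A by rewrite index_mem.
exists (fun i => c i + (i == index a A)).
under eq_bigr do rewrite mulnDl.
rewrite big_split /= -Hc addnC; congr (_ + _).
rewrite (bigD1 (Ordinal ia)) //= eqxx mul1n nth_index // big1 ?addn0 // => i.
by rewrite -val_eqE /= => /negbTE ->.
Qed.

Lemma genE A : gen A = ngen A.
Proof. by apply: functional_extensionality => x; apply: propositional_extensionality; apply: genP. Qed.

Lemma ngen_min A x : ngen A x -> 0 < x -> exists2 a, a \in A & a <= x.
Proof. by case=> [|a y aA _] // _; exists a; rewrite ?leq_addr. Qed.

Lemma ngen_rcons_lt A b x : ngen (rcons A b) x -> x < b -> ngen A x.
Proof.
elim=> [|a y aAb _ IH] lt_ab; first exact: ngen0.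
have aA : a \in A.
  by move: aAb; rewrite mem_rcons inE => /predU1P[ab|//]; move: lt_ab; rewrite ab ltnNge leq_addr.
by apply: ngenD aA (IH (leq_ltn_trans (leq_addl _ _) lt_ab)).
Qed.

Lemma ngen_nonmultiple A m x : ngen A x -> x %% m != 0 ->
  exists g, [/\ g \in A, g %% m != 0, g <= x & ngen A (x - g)].
Proof.
elim=> [|a y aA Ay IH]; first by rewrite mod0n.
have [am0 xm | am xm] := eqVneq (a %% m) 0.
  have [|g [gA gm gy Ayg]] := IH; first by rewrite -modnDml am0 in xm.
  exists g; split=> //; first exact: leq_trans gy (leq_addl _ _).
  by rewrite -addnBA //; apply: ngenD.
by exists a; rewrite leq_addr addKn.
Qed.

(* x = r w + q m with r = x mod m, because w = 1 mod m. *)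
Lemma ngen_conductor A m w x : 0 < m -> ngen A m -> ngen A w -> w %% m = 1 ->
  m * w <= x -> ngen A x.
Proof.
move=> m_gt0 Am Aw wm1 le_x.
set r := x %% m.
have rw_le : r * w <= x.
  by apply: leq_trans le_x; rewrite leq_mul2r ltnW ?ltn_pmod ?orbT.
have rest_mod : (x - r * w) %% m = 0.
  apply/eqP; rewrite -[0](mod0n m) -(eqn_modDr (r * w)) subnK // add0n.
  by rewrite -modnMmr wm1 muln1 modn_mod.
rewrite -(subnK rw_le) (divn_eq (x - r * w) m) rest_mod addn0.
by apply: ngen_add; apply: ngen_mull.
Qed.

Lemma uniq_has_other (T : eqType) (s : seq T) x : uniq s -> 1 < size s ->
  exists2 y, y \in s & y != x.
Proof.
move=> s_uniq s_gt1; have [/hasP[y ys yx] | /hasPn all_x] := boolP (has (predC1 x) s).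
  by exists y.
have : size s <= size [:: x].
  by apply: uniq_leq_size => // y /all_x /negPn /eqP ->; rewrite mem_head.
by rewrite leqNgt s_gt1.
Qed.

Lemma classical_ex_min (P : nat -> Prop) x : P x ->
  exists y, P y /\ forall z, P z -> y <= z.
Proof.
elim/ltn_ind: x => x IH Px.
have [[z [Pz lt_zx]] | no_smaller] := classic (exists z, P z /\ z < x).
  exact: IH lt_zx Pz.
exists x; split=> // z Pz; rewrite leqNgt; apply/negP => lt_zx.
by apply: no_smaller; exists z.
Qed.

Lemma apery_elt_exists S m i : numerical_semigroup S -> 0 < m ->
  exists w, is_apery_elt S m i w.
Proof.
case=> _ _ [N SN] m_gt0.
have [|w [[Sw wi] w_min]] := @classical_ex_min (fun y => S y /\ y = i %[mod m]) (i + N * m).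
  split; last by rewrite addnC modnMDl.
  by apply: SN; apply: leq_trans (leq_pmulr N m_gt0) (leq_addl _ _).
by exists w; split=> // z Sz zi; apply: w_min.
Qed.

Lemma MANS_consecutive S m : numerical_semigroup S -> is_multiplicity S m ->
  (forall j wj wj1, 0 < j -> j.+1 <= m - 1 ->
     is_apery_elt S m j wj -> is_apery_elt S m j.+1 wj1 -> wj < wj1) ->
  MANS S.
Proof.
move=> numS [m_gt0 Sm m_min] step; split=> //; exists m; split=> // i j wi wj i_gt0 ij jm.
elim: j ij jm wj => [//|j IH] ij jm wj wi_ap wj_ap.
have [wk wk_ap] := apery_elt_exists j numS m_gt0.
move: ij; rewrite ltnS leq_eqVlt => /predU1P[ij | ij].
  by subst j; apply: step wi_ap wj_ap.
apply: ltn_trans (IH ij _ _ wi_ap wk_ap) (step _ _ _ _ jm wk_ap wj_ap); lia.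
Qed.

Section MinimalSystem.

Variables (S : nat -> Prop) (A : seq nat).
Hypothesis msgS : is_msg S A.

Lemma msg_spanP x : ngen A x <-> S x.
Proof. by case: msgS => _ + _ => /(_ x); rewrite genP. Qed.

Lemma msg_irredundant a : a \in A -> ~ ngen [seq y <- A | y != a] a.
Proof.
move=> aA Aa; case: msgS => _ _ /(_ [seq y <- A | y != a]) min.
have sub : {subset [seq y <- A | y != a] <= A} by move=> z; rewrite mem_filter => /andP[].
have span_eq x : gen [seq y <- A | y != a] x <-> S x.
  rewrite genP -msg_spanP; split; first exact: sub_ngen.
  elim=> [|b y bA _ IH]; first exact: ngen0.
  have [-> | ba] := eqVneq b a; first exact: ngen_add.
  by apply: ngenD IH; rewrite mem_filter ba.
by have := min sub span_eq a aA; rewrite mem_filter eqxx.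
Qed.

Lemma msg_gt0 a : a \in A -> 0 < a.
Proof.
move=> aA; rewrite lt0n; apply/eqP => a0; apply: (msg_irredundant aA).
by rewrite a0; apply: ngen0.
Qed.

Lemma msg_ndvd a c : a \in A -> c \in A -> c != a -> ~~ (c %| a).
Proof.
move=> aA cA ca; apply/negP => /dvdnP[k ak]; apply: (msg_irredundant aA).
by rewrite [X in ngen _ X]ak; apply/ngen_mull/ngen_mem; rewrite mem_filter ca.
Qed.

Lemma msg_multiplicity m : is_multiplicity S m -> m \in A.
Proof.
case=> m_gt0 /(msg_spanP) Am m_min.
have [a aA a_le_m] := ngen_min Am m_gt0.
suff -> : m = a by [].
apply/anti_leq; rewrite a_le_m andbT.
by apply: m_min; [apply/msg_spanP/ngen_mem | apply: msg_gt0].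
Qed.

Lemma msg_sub B : uniq B -> {subset B <= A} -> is_msg (gen B) B.
Proof.
move=> uB sBA; split=> // C sCB genC a aB; apply/negPn/negP => aC.
apply: (msg_irredundant (sBA _ aB)).
have : ngen C a by apply/genP/genC/genP/ngen_mem.
apply: sub_ngen => z zC; rewrite mem_filter sBA ?sCB // andbT.
by apply: contraNneq aC => <-.
Qed.

End MinimalSystem.

Section DropLargestGenerator.

Variables (S : nat -> Prop) (m b : nat) (A : seq nat).
Hypothesis numS : numerical_semigroup S.
Hypothesis multS : is_multiplicity S m.
Hypothesis aperyS_sorted : forall i j wi wj, 1 <= i -> i < j -> j <= m - 1 ->
  is_apery_elt S m i wi -> is_apery_elt S m j wj -> wi < wj.
Hypothesis msgS : is_msg S (rcons A b).
Hypothesis lt_prefix_last : forall a, a \in A -> a < b.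
Hypothesis prefix_other : exists2 a, a \in A & a != m.

Lemma multiplicity_gt0 : 0 < m. Proof. by case: multS. Qed.

Lemma mem_prefix a : a \in A -> a \in rcons A b.
Proof. by rewrite mem_rcons inE => ->; rewrite orbT. Qed.

Lemma prefix_sub x : ngen A x -> S x.
Proof. by move=> Ax; apply/(msg_spanP msgS)/(sub_ngen mem_prefix). Qed.

Lemma prefix_lt x : S x -> x < b -> ngen A x.
Proof. by move=> /(msg_spanP msgS); apply: ngen_rcons_lt. Qed.

Lemma multiplicity_in_prefix : m \in A.
Proof.
have [a aA _] := prefix_other; case: multS => _ _ m_min.
have m_le_a : m <= a.
  by apply: m_min (prefix_sub (ngen_mem aA)) (msg_gt0 msgS (mem_prefix aA)).
move: (msg_multiplicity msgS multS); rewrite mem_rcons inE => /predU1P[mb|//].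
by have := lt_prefix_last aA; rewrite -mb ltnNge m_le_a.
Qed.

Lemma prefix_ndvd a : a \in A -> a != m -> a %% m != 0.
Proof.
move=> aA am; apply: (msg_ndvd msgS (mem_prefix aA) (mem_prefix multiplicity_in_prefix)).
by rewrite eq_sym.
Qed.

Lemma multiplicity_gt1 : 1 < m.
Proof.
have [a aA am] := prefix_other; have := prefix_ndvd aA am.
by rewrite ltn_neqAle multiplicity_gt0 andbT; apply: contraNneq => <-; rewrite modn1.
Qed.

Lemma apery1_min w1 x : is_apery_elt S m 1 w1 -> S x -> x %% m != 0 -> w1 <= x.
Proof.
move=> w1_ap Sx xm; have [x1 | xn1] := eqVneq (x %% m) 1.
  by case: w1_ap => _ _; apply=> //; rewrite x1 modn_small ?multiplicity_gt1.
have [wr wr_ap] := apery_elt_exists (x %% m) numS multiplicity_gt0.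
have x_lt_m : x %% m < m := ltn_pmod x multiplicity_gt0.
have w1_lt_wr : w1 < wr by apply: aperyS_sorted _ _ _ w1_ap wr_ap; lia.
by apply: leq_trans (ltnW w1_lt_wr) _; case: wr_ap => _ _; apply; rewrite ?modn_mod.
Qed.

Lemma apery1_lt_last w1 : is_apery_elt S m 1 w1 -> w1 < b.
Proof.
move=> w1_ap; have [a aA am] := prefix_other.
apply: leq_ltn_trans (lt_prefix_last aA).
by apply: apery1_min w1_ap (prefix_sub (ngen_mem aA)) (prefix_ndvd aA am).
Qed.

Lemma numerical_prefix : numerical_semigroup (ngen A).
Proof.
have [w1 w1_ap] := apery_elt_exists 1 numS multiplicity_gt0.
have Aw1 : ngen A w1 by apply: prefix_lt (apery1_lt_last w1_ap); case: w1_ap.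
have w1_mod : w1 %% m = 1 by case: w1_ap => _ -> _; rewrite modn_small ?multiplicity_gt1.
split; [exact: ngen0 | exact: ngen_add | exists (m * w1) => x].
exact: ngen_conductor multiplicity_gt0 (ngen_mem multiplicity_in_prefix) Aw1 w1_mod.
Qed.

Lemma multiplicity_prefix : is_multiplicity (ngen A) m.
Proof.
case: multS => m_gt0 _ m_min; split=> [//||x /prefix_sub]; last exact: m_min.
exact: ngen_mem multiplicity_in_prefix.
Qed.

(* The witness is 0 if g = 1 mod m, and otherwise the Apery element of S of
   residue (g mod m) - 1, which the MANS property puts below g. *)
Lemma prefix_residue_pred g : g \in A -> g %% m != 0 ->
  exists v, [/\ ngen A v, (v + 1) %% m = g %% m & v < g].
Proof.
move=> gA gm; have [g1 | gn1] := eqVneq (g %% m) 1.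
  exists 0; split; first exact: ngen0.
    by rewrite add0n g1 modn_small ?multiplicity_gt1.
  by rewrite lt0n; apply: contraNneq gm => ->; rewrite mod0n.
have g_lt_m : g %% m < m := ltn_pmod g multiplicity_gt0.
have [wa wa_ap] := apery_elt_exists (g %% m).-1 numS multiplicity_gt0.
have [wb wb_ap] := apery_elt_exists (g %% m) numS multiplicity_gt0.
have wa_lt_wb : wa < wb by apply: aperyS_sorted _ _ _ wa_ap wb_ap; lia.
have wb_le_g : wb <= g.
  by case: wb_ap => _ _; apply; [exact: prefix_sub (ngen_mem gA) | rewrite modn_mod].
have wa_lt_g : wa < g := leq_trans wa_lt_wb wb_le_g.
case: wa_ap => Swa wa_mod _; exists wa; split=> //.
  exact: prefix_lt Swa (ltn_trans wa_lt_g (lt_prefix_last gA)).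
by rewrite -modnDml wa_mod modnDml addn1 prednK ?modn_mod // lt0n.
Qed.

Lemma apery_prefix_step j wj wj1 : 0 < j -> j.+1 <= m - 1 ->
  is_apery_elt (ngen A) m j wj -> is_apery_elt (ngen A) m j.+1 wj1 -> wj < wj1.
Proof.
move=> j_gt0 jm [_ _ wj_min] [Awj1 wj1_mod _].
have wj1_res : wj1 %% m = j.+1 by rewrite wj1_mod modn_small //; lia.
have [|g [gA gm g_le Arest]] := ngen_nonmultiple (m := m) Awj1; first by rewrite wj1_res.
have [v [Av v_mod v_lt_g]] := prefix_residue_pred gA gm.
have lt_wj1 : v + (wj1 - g) < wj1 by rewrite -{2}(subnKC g_le) ltn_add2r.
have res_j : v + (wj1 - g) = j %[mod m].
  apply/eqP; rewrite -(eqn_modDr 1) addnAC -modnDml v_mod modnDml subnKC //.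
  by rewrite wj1_res addn1 modn_small //; lia.
exact: leq_ltn_trans (wj_min _ (ngen_add Av Arest) res_j) lt_wj1.
Qed.

Lemma MANS_prefix : MANS (ngen A).
Proof. exact: MANS_consecutive numerical_prefix multiplicity_prefix apery_prefix_step. Qed.

End DropLargestGenerator.

Theorem lemma4p2 (S : nat -> Prop) (e : nat) (n : seq nat) :
  2 <= e ->
  MANS S ->
  is_msg S n ->
  sorted ltn n ->
  size n = e.+1 ->
  MANS (gen (take e n)) /\
  exists B : seq nat, is_msg (gen (take e n)) B /\ size B = (size n).-1.
Proof.
move=> e_ge2 [numS [m [multS aperyS_sorted]]] msgS sorted_n size_n.
have n_rcons : n = rcons (take e n) (nth 0 n e).
  by rewrite -take_nth ?size_n // -size_n take_size.
rewrite size_n; rewrite n_rcons in msgS sorted_n.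
have lt_last a : a \in take e n -> a < nth 0 n e.
  by move: sorted_n; rewrite (sorted_pairwise ltn_trans) pairwise_rcons => /andP[/allP/(_ a)].
have uniq_prefix : uniq (take e n).
  by case: msgS; rewrite rcons_uniq => /andP[].
have other : exists2 a, a \in take e n & a != m.
  by apply: uniq_has_other uniq_prefix _; rewrite size_takel ?size_n.
split; first by rewrite genE; apply: MANS_prefix numS multS aperyS_sorted msgS lt_last other.
exists (take e n); rewrite size_takel ?size_n //; split=> //.
by apply: (msg_sub msgS uniq_prefix) => a; apply: mem_prefix.
Qed.
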